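(* Let $\alpha$ be a hybrid program, $S\subseteq \mathrm{VAR}(\alpha)$ a set of sensor variables, and $o_1,o_2:S\to\mathbb{R}_{\ge0}$ offset functions with $o_1(s)\le o_2(s)$ for all $s\in S$. Let $r,r_1,r_2\in\mathbb{R}$ and formulas $\phi_{pre},\phi_{post}$ be such that $\alpha$ is backward $r$-safe, $\alpha_{S,o_1}$ is backward $r_1$-safe, and $\alpha_{S,o_2}$ is backward $r_2$-safe, each for $\phi_{pre}$ and $\phi_{post}$. Then $r_2\le r_1\le r$.
   Context: Fix a set $V$ of real-valued variables; a state is a map $\omega:V\to\mathbb{R}$, $\mathcal{S}$ the set of states. Hybrid programs: $x:=\theta$, $x:=*$, $x'=\theta\,\&\,Q$, $?\phi$, $\alpha;\beta$, $\alpha\cup\beta$, $\alpha^*$, with the standard relational semantics $[\![\alpha]\!]\subseteq\mathcal{S}\times\mathcal{S}$ of differential dynamic logic (assignment updates one variable; $x:=*$ sets $x$ to an arbitrary real; $x'=\theta\,\&\,Q$ follows a solution of the ODE for some duration $r\ge0$ staying in $[\![Q]\!]$ throughout; test, relational composition, union, reflexive-transitive closure). Formulas of dL (comparisons, $\neg,\wedge,\forall$, $[\alpha]\phi$) have semantics $[\![\phi]\!]\subseteq\mathcal{S}$, with $[\![[\alpha]\phi]\!]=\{\omega\mid\forall\nu,(\omega,\nu)\in[\![\alpha]\!]\Rightarrow\nu\in[\![\phi]\!]\}$. $\mathrm{VAR}(\alpha)$ is the set of variables of $\alpha$ (its free and bound variables). Distance: $d(\omega,\nu)=\sqrt{\sum_{x\in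 V}(\omega(x)-\nu(x))^2}$; for $X\subseteq\mathcal{S}$, $\mathrm{Dist}(\omega,X)=\inf\{d(\omega,\nu)\mid\nu\notin X\}$ if $\omega\in X$ and $-\inf\{d(\omega,\nu)\mid\nu\in X\}$ if $\omega\notin X$ (infima in $\mathbb{R}\cup\{\pm\infty\}$, $\inf\emptyset=\infty$). $\alpha$ is backward $r$-safe for $\phi_{pre}$ and $\phi_{post}$ if $r=\inf\{\mathrm{Dist}(\omega,[\![[\alpha]\phi_{post}]\!])\mid\omega\in[\![\phi_{pre}]\!]\}$. Sensor modeling: each sensor variable $q_s$ has an associated physical variable $q_p$, and (modeling convention) sensor reads are assignments $q_s:=q_p$. Bounded sensor attack: for $S\subseteq\mathrm{VAR}(\alpha)$ and $o:S\to\mathbb{R}_{\ge0}$, $\alpha_{S,o}$ is the program obtained from $\alpha$ by replacing every assignment to a variable $q_s\in S$ with $q_s:=*\,;\ ?(q_s\ge q_p-o(q_s)\wedge q_s\le q_p+o(q_s))$. *)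

From HB Require Import structures.
From mathcomp Require Import all_boot all_order all_algebra.
From mathcomp Require Import all_classical all_reals all_analysis.

Set Implicit Arguments.
Unset Strict Implicit.
Unset Printing Implicit Defensive.

Import Order.TTheory GRing.Theory Num.Theory.
Local Open Scope classical_set_scope.
Local Open Scope ring_scope.

Inductive rtc (T : Type) (Rel : T -> T -> Prop) : T -> T -> Prop :=
| rtc_refl x : rtc Rel x x
| rtc_step x y z : Rel x y -> rtc Rel y z -> rtc Rel x z.

Section dL.
Context (R : realType) (V : finType).

Definition state := V -> R.

Definition upd (w : state) (x : V) (c : R) : state :=
  fun y => if y == x then c else w y.

Inductive term :=
| TVar of V
| TConst of R
| TNeg of term
| TPlus of term & term
| TMul of term & term.

Inductive fml :=
| FLe of term & term
| FLt of term & term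
| FEq of term & term
| FNot of fml
| FAnd of fml & fml
| FForall of V & fml
| FBox of prog & fml
with prog :=
| PAsgn of V & term
| PRand of V
| PODE of V & term & fml      (* x' = theta & Q *)
| PTest of fml
| PSeq of prog & prog
| PChoice of prog & prog
| PStar of prog.

Fixpoint tsem (t : term) (w : state) : R :=
  match t with
  | TVar x => w x
  | TConst c => c
  | TNeg t => - tsem t w
  | TPlus t1 t2 => tsem t1 w + tsem t2 w
  | TMul t1 t2 => tsem t1 w * tsem t2 w
  end.

Fixpoint fsem (f : fml) (w : state) {struct f} : Prop :=
  match f with
  | FLe t1 t2 => tsem t1 w <= tsem t2 w
  | FLt t1 t2 => tsem t1 w < tsem t2 w
  | FEq t1 t2 => tsem t1 w = tsem t2 w
  | FNot f => ~ fsem f w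
  | FAnd f g => fsem f w /\ fsem g w
  | FForall x f => forall c : R, fsem f (upd w x c)
  | FBox a f => forall v, psem a w v -> fsem f v
  end
with psem (a : prog) (w v : state) {struct a} : Prop :=
  match a with
  | PAsgn x t => v = upd w x (tsem t w)
  | PRand x => exists c : R, v = upd w x c
  | PODE x t q =>
      exists (r : R) (phi : R -> state),
        [/\ 0 <= r, phi 0 = w, phi r = v,
            (forall s, 0 <= s <= r ->
               (forall y, y != x -> phi s y = w y) /\ fsem q (phi s)) &
            (forall s, 0 <= s <= r ->
               is_derive s 1 (fun u => phi u x) (tsem t (phi s)))]
  | PTest f => v = w /\ fsem f w
  | PSeq a b => exists u, psem a w u /\ psem b u v
  | PChoice a b => psem a w v \/ psem b w v
  | PStar a => rtc (psem a) w v
  end.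

(* VAR: all variables occurring (free or bound). *)
Fixpoint tvars (t : term) : {set V} :=
  match t with
  | TVar x => [set x]
  | TConst _ => finset.set0
  | TNeg t => tvars t
  | TPlus t1 t2 => tvars t1 :|: tvars t2
  | TMul t1 t2 => tvars t1 :|: tvars t2
  end.

Fixpoint fvars (f : fml) : {set V} :=
  match f with
  | FLe t1 t2 => tvars t1 :|: tvars t2
  | FLt t1 t2 => tvars t1 :|: tvars t2
  | FEq t1 t2 => tvars t1 :|: tvars t2
  | FNot f => fvars f
  | FAnd f g => fvars f :|: fvars g
  | FForall x f => x |: fvars f
  | FBox a f => pvars a :|: fvars f
  end
with pvars (a : prog) : {set V} :=
  match a with
  | PAsgn x t => x |: tvars t
  | PRand x => [set x]
  | PODE x t q => x |: (tvars t :|: fvars q)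
  | PTest f => fvars f
  | PSeq a b => pvars a :|: pvars b
  | PChoice a b => pvars a :|: pvars b
  | PStar a => pvars a
  end.

(* Modeling convention: every assignment to a sensor variable q_s in S
   (at the program level) is a sensor read  q_s := q_p, with q_p = phys q_s. *)
Fixpoint sensor_reads (phys : V -> V) (S : {set V}) (a : prog) : Prop :=
  match a with
  | PAsgn x t => x \in S -> t = TVar (phys x)
  | PRand _ | PODE _ _ _ | PTest _ => True
  | PSeq a b | PChoice a b => sensor_reads phys S a /\ sensor_reads phys S b
  | PStar a => sensor_reads phys S a
  end.

(* Bounded sensor attack alpha_{S,o}: every assignment to q_s in S becomes
   q_s := * ; ?(q_s >= q_p - o(q_s) /\ q_s <= q_p + o(q_s)). *)
Fixpoint attack (phys : V -> V) (S : {set V}) (o : V -> R) (a : prog) : prog :=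
  match a with
  | PAsgn x t =>
      if x \in S then
        PSeq (PRand x)
             (PTest (FAnd (FLe (TPlus (TVar (phys x)) (TNeg (TConst (o x)))) (TVar x))
                          (FLe (TVar x) (TPlus (TVar (phys x)) (TConst (o x))))))
      else PAsgn x t
  | PRand x => PRand x
  | PODE x t q => PODE x t q
  | PTest f => PTest f
  | PSeq a b => PSeq (attack phys S o a) (attack phys S o b)
  | PChoice a b => PChoice (attack phys S o a) (attack phys S o b)
  | PStar a => PStar (attack phys S o a)
  end.

Definition dist (w v : state) : R := Num.sqrt (\sum_(x : V) (w x - v x) ^+ 2).

Definition Dist (w : state) (X : set state) : \bar R :=
  if pselect (X w) then ereal_inf [set (dist w v)%:E | v in ~` X]
  else (- ereal_inf [set (dist w v)%:E | v in X])%E.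

Definition backward_safe (a : prog) (pre post : fml) (r : R) : Prop :=
  r%:E = ereal_inf [set Dist w (fsem (FBox a post)) | w in fsem pre].

End dL.

From HB Require Import structures.
From mathcomp Require Import all_boot all_order all_algebra.
From mathcomp Require Import all_classical all_reals all_analysis.
From mathcomp Require Import lra.

Set Implicit Arguments.
Unset Strict Implicit.
Unset Printing Implicit Defensive.

Import Order.TTheory GRing.Theory Num.Theory.
Local Open Scope ring_scope.
Local Open Scope classical_set_scope.

(* Every run of the original program is a run of its attacked version, in
   which the honest reading q_s := q_p passes the test with any offset
   o(q_s) >= 0, and every run under offsets o1 is a run under larger offsets
   o2.  Enlarging the transition relation shrinks [[ [alpha] post ]], the
   signed distance Dist(w, X) is monotone in X, hence so is its infimum over
   the precondition, which is the robustness r. *)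

Lemma sub_rtc (T : Type) (P Q : T -> T -> Prop) :
  (forall x y, P x y -> Q x y) -> forall x y, rtc P x y -> rtc Q x y.
Proof.
move=> PQ x y; elim=> [z|x0 y0 z0 /PQ Qxy _ IH]; first exact: rtc_refl.
exact: rtc_step Qxy IH.
Qed.

Lemma le_ereal_inf_image (R : realType) (T : Type) (P : set T)
    (f g : T -> \bar R) :
  (forall x, P x -> f x <= g x)%E ->
  (ereal_inf [set f x | x in P] <= ereal_inf [set g x | x in P])%E.
Proof.
move=> fg; apply: le_ereal_inf_tmp => _ [x Px <-].
by apply: le_trans (fg x Px); apply: ereal_inf_lbound; exists x.
Qed.

Section Refinement.
Context (R : realType) (V : finType).
Implicit Types (a b : prog R V) (w v : state R V) (X Y : set (state R V)).

Definition prog_le a b := forall w v, psem a w v -> psem b w v.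

Lemma prog_le_refl a : prog_le a a.
Proof. by []. Qed.

Lemma prog_le_seq a1 a2 b1 b2 :
  prog_le a1 a2 -> prog_le b1 b2 -> prog_le (PSeq a1 b1) (PSeq a2 b2).
Proof. by move=> le_a le_b w v [u [/le_a au /le_b bu]]; exists u. Qed.

Lemma prog_le_choice a1 a2 b1 b2 :
  prog_le a1 a2 -> prog_le b1 b2 -> prog_le (PChoice a1 b1) (PChoice a2 b2).
Proof. by move=> le_a le_b w v [/le_a|/le_b]; [left|right]. Qed.

Lemma prog_le_star a b : prog_le a b -> prog_le (PStar a) (PStar b).
Proof. exact: sub_rtc. Qed.

Lemma box_antimono a b post :
  prog_le a b -> fsem (FBox b post) `<=` fsem (FBox a post).
Proof. by move=> le_ab w box_b v /le_ab; apply: box_b. Qed.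

Lemma dist_ge0 w v : 0 <= dist w v.
Proof. exact: sqrtr_ge0. Qed.

Lemma ereal_inf_dist_ge0 w X :
  (0 <= ereal_inf [set (dist w v)%:E | v in X])%E.
Proof. by apply: le_ereal_inf_tmp => _ [v _ <-]; rewrite lee_fin dist_ge0. Qed.

Lemma le_Dist w X Y : X `<=` Y -> (Dist w X <= Dist w Y)%E.
Proof.
move=> XY; rewrite /Dist; case: pselect => Xw; case: pselect => Yw.
- by apply/ereal_inf_le_tmp/image_subset => v nYv Xv; apply/nYv/XY.
- by have := XY _ Xw.
- apply: (@le_trans _ _ 0%E); last exact: ereal_inf_dist_ge0.
  by rewrite leeNl oppe0 ereal_inf_dist_ge0.
- by rewrite leeN2; apply/ereal_inf_le_tmp/image_subset.
Qed.

Lemma backward_safe_antimono a b pre post r1 r2 :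
  prog_le a b -> backward_safe b pre post r1 -> backward_safe a pre post r2 ->
  r1 <= r2.
Proof.
move=> le_ab safe_b safe_a; rewrite -lee_fin safe_b safe_a.
by apply: le_ereal_inf_image => w _; apply/le_Dist/box_antimono.
Qed.

End Refinement.

Section Attack.
Context (R : realType) (V : finType) (phys : V -> V) (S : {set V}).

Lemma prog_le_attack (o : V -> R) (a : prog R V) :
  (forall s, s \in S -> 0 <= o s) -> sensor_reads phys S a ->
  prog_le a (attack phys S o a).
Proof.
move=> o_ge0; elim: a => [x t read_x|x _|x t q _|f _|a IHa b IHb|a IHa b IHb|a IHa];
  try exact: prog_le_refl.
- move=> w v /= ->; case: ifP => xS //.
  rewrite (read_x xS); exists (upd w x (w (phys x))).
  split; first by exists (w (phys x)).
  have := o_ge0 _ xS; rewrite /= /upd eqxx.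
  by case: ifP => _ ox; split=> //; split; lra.
- by move=> [/IHa le_a /IHb le_b]; apply: prog_le_seq.
- by move=> [/IHa le_a /IHb le_b]; apply: prog_le_choice.
- by move=> /IHa; apply: prog_le_star.
Qed.

Lemma attack_le (o1 o2 : V -> R) (a : prog R V) :
  (forall s, s \in S -> o1 s <= o2 s) ->
  prog_le (attack phys S o1 a) (attack phys S o2 a).
Proof.
move=> o12; elim: a => [x t|x|x t q|f|a le_a b le_b|a le_a b le_b|a le_a];
  try exact: prog_le_refl.
- move=> w v /=; case: ifP => xS //= [u [read_u [-> [lo hi]]]].
  exists u; split=> //; split=> //=; move: lo hi => /= lo hi.
  by have := o12 _ xS; split; lra.
- exact: prog_le_seq.
- exact: prog_le_choice.
- exact: prog_le_star.
Qed.

End Attack.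

Theorem theorem2 (R : realType) (V : finType) (phys : V -> V)
  (a : prog R V) (S : {set V}) (o1 o2 : V -> R) (r r1 r2 : R)
  (pre post : fml R V) :
  S \subset pvars a ->
  (forall s, s \in S -> 0 <= o1 s) ->
  (forall s, s \in S -> 0 <= o2 s) ->
  (forall s, s \in S -> o1 s <= o2 s) ->
  sensor_reads phys S a ->
  backward_safe a pre post r ->
  backward_safe (attack phys S o1 a) pre post r1 ->
  backward_safe (attack phys S o2 a) pre post r2 ->
  r2 <= r1 <= r.
Proof.
move=> _ o1_ge0 _ o12 reads safe safe1 safe2; apply/andP; split.
- by apply: backward_safe_antimono safe2 safe1; apply: attack_le.
- by apply: backward_safe_antimono safe1 safe; apply: prog_le_attack.
Qed.
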